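(* Suppose that OnlinePacker (described in the context) has produced a packing of n horizontal parallelograms of height 1 and width at most 1 in which there are no near-empty boxes. Then the density of the pieces in the occupied part of the strip is at least Ω(n^{1-log 3}), where log is base 2.
   Context: Setting: online translational strip packing. The strip is a horizontal strip of height 1, bounded on the left by a vertical segment and unbounded to the right. Pieces arrive one at a time, each must be placed by a translation only, interior-disjoint from previously placed pieces, before the next piece is revealed. The occupied part of the strip is the part from its left end to the vertical line through the rightmost point of a placed piece; density is total piece area divided by the area of the occupied part. Here all pieces are horizontal parallelograms (parallelograms with a pair of horizontal edges) of height 1 and width at most 1. Box types: these form an infinite ternary tree. The root, the basic box type, is a 2 x 1 rectangle. A d-dimensional box type is a vector [x_1,...,x_d] in {-1,0,+1}^d and is a horizontal parallelogram of height 1. Given type T with bottom edge b and top edge t, split b into three equal consecutive segments b_{-1}, b_0, b_{+1} and t likewise into t_{-1}, t_0, t_{+1}; the child type T ⊕ [x_{d+1}] is the parallelogram spanned by b_0 and t_{x_{d+1}}. Thus a d-dimensional type has base edges of length 2·3^{-d} (area 2·3^{-d}). A box type T matches a piece P if P can be packed into T and area(T) ≤ 6·area(P). A type is suitable for P if it is an ancestor (including itself) of a type matching P. Algorithm OnlinePacker: each allocated box of type T contains either a single piece that T matches, or one, two or three boxes whose types are children of T. When a piece P arrives: if there is an allocated box B_1 whose type T_1 is suitable for P (with T_1,...,T_k the tree path from T_1 to a type T_k matching P) and B_1 has room for one more box of type T_2, choose such B_1 of maximum dimension; then for i = 1,...,k-1 allocate in B_i a new box B_{i+1} of type T_{i+1},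 as far left in B_i as possible, and place P in B_k. Otherwise allocate a new basic box as far left in the strip as possible, call it B_1, and proceed the same way. A d-dimensional box is near-empty if exactly one (d+1)-dimensional box is allocated in it. *)

From Stdlib Require Import Reals List.
Import ListNotations.
Open Scope R_scope.

(* Horizontal parallelograms of height 1 lying in the strip R x [0,1].    *)
(* pb = x-coordinate of the left end of the bottom edge (y = 0),           *)
(* pt = x-coordinate of the left end of the top edge (y = 1),              *)
(* pl = length of the two horizontal edges.                                *)
Record para := mkPara { pb : R; pt : R; pl : R }.

Definition in_closed (p : para) (x y : R) : Prop :=
  0 <= y <= 1 /\
  pb p + (pt p - pb p) * y <= x <= pb p + (pt p - pb p) * y + pl p.

Definition in_open (p : para) (x y : R) : Prop :=
  0 < y < 1 /\
  pb p + (pt p - pb p) * y < x < pb p + (pt p - pb p) * y + pl p.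

Definition contained (p q : para) : Prop :=
  forall x y, in_closed p x y -> in_closed q x y.

Definition int_disjoint (p q : para) : Prop :=
  ~ (exists x y, in_open p x y /\ in_open q x y).

Definition translate (p : para) (h : R) : para :=
  mkPara (pb p + h) (pt p + h) (pl p).

Definition area (p : para) : R := pl p.

Definition right_end (p : para) : R := Rmax (pb p) (pt p) + pl p.

(* a piece: horizontal parallelogram of height 1 and width (horizontal
   extent of the piece) at most 1, of positive area *)
Definition valid_piece (p : para) : Prop :=
  0 < pl p /\ pl p + Rabs (pt p - pb p) <= 1.

(* Box types: vectors over {-1,0,+1}.                                      *)
Inductive dir := Dm | D0 | Dp.

Definition dirR (d : dir) : R :=
  match d with Dm => -1 | D0 => 0 | Dp => 1 end.

Definition btype := list dir.

(* child of a parallelogram: spanned by b_0 and t_x *)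
Definition child_para (p : para) (x : dir) : para :=
  mkPara (pb p + pl p / 3) (pt p + (1 + dirR x) * pl p / 3) (pl p / 3).

Definition basic_para : para := mkPara 0 0 2.

(* the parallelogram of type [x_1,...,x_d] (in coordinates of a basic box
   whose left side is at x = 0) *)
Definition type_para (T : btype) : para := fold_left child_para T basic_para.

Definition matches (T : btype) (P : para) : Prop :=
  (exists h, contained (translate P h) (type_para T)) /\
  area (type_para T) <= 6 * area P.

Definition suitable (T : btype) (P : para) : Prop :=
  exists ext, matches (T ++ ext) P.

(* an allocated box: its type, the horizontal translation of the type's   *)
(* parallelogram, and the index of the box it was allocated in (None for  *)
(* basic boxes, allocated directly in the strip)                          *)
Record box := mkBox { bty : btype; bpos : R; bpar : option nat }.

Definition box_region (b : box) : para := translate (type_para (bty b)) (bpos b).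

(* boxes: allocated boxes (indexed by position in the list);
   placed: placed pieces (their region) together with the index of the box
   they were placed in *)
Record state := mkState { boxes : list box; placed : list (para * nat) }.

Definition empty_state : state := mkState [] [].

Definition dummy_box : box := mkBox [] 0 None.
Definition nth_box (st : state) (i : nat) : box := nth i (boxes st) dummy_box.

Definition is_child (st : state) (i j : nat) : Prop :=
  (j < length (boxes st))%nat /\ bpar (nth_box st j) = Some i.

Definition holds_piece (st : state) (i : nat) : Prop :=
  exists q, In q (placed st) /\ snd q = i.

Definition fits_in (st : state) (i : nat) (T : btype) (h : R) : Prop :=
  contained (translate (type_para T) h) (box_region (nth_box st i)) /\
  (forall j, is_child st i j ->
     int_disjoint (translate (type_para T) h) (box_region (nth_box st j))).

(* box i has room for one more box of type T (a box containing a piece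
   contains nothing else) *)
Definition has_room (st : state) (i : nat) (T : btype) : Prop :=
  ~ holds_piece st i /\ exists h, fits_in st i T h.

Definition leftmost_in (st : state) (i : nat) (T : btype) (h : R) : Prop :=
  fits_in st i T h /\ forall h', fits_in st i T h' -> h <= h'.

Definition add_box (st : state) (b : box) : state :=
  mkState (boxes st ++ [b]) (placed st).

(* alloc_chain st i ext st' k : starting from box i, successively allocate
   boxes of the types T_1 ++ [x_1], T_1 ++ [x_1;x_2], ... (ext = [x_1;...]),
   each as far left as possible in the previous one; k is the last box *)
Inductive alloc_chain : state -> nat -> list dir -> state -> nat -> Prop :=
| ac_nil : forall st i, alloc_chain st i [] st i
| ac_cons : forall st i x ext h st' k,
    let T := bty (nth_box st i) ++ [x] in
    leftmost_in st i T h ->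
    alloc_chain (add_box st (mkBox T h (Some i))) (length (boxes st)) ext st' k ->
    alloc_chain st i (x :: ext) st' k.

Definition place (st : state) (P : para) (k : nat) (st' : state) : Prop :=
  exists h,
    contained (translate P h) (box_region (nth_box st k)) /\
    (forall q, In q (placed st) -> int_disjoint (translate P h) (fst q)) /\
    st' = mkState (boxes st) (placed st ++ [(translate P h, k)]).

Definition candidate (st : state) (P : para) (i : nat) (x : dir) (ext : list dir) : Prop :=
  (i < length (boxes st))%nat /\
  matches (bty (nth_box st i) ++ x :: ext) P /\
  has_room st i (bty (nth_box st i) ++ [x]).

Definition basic_box_at (X : R) : para := translate basic_para X.

Definition basic_free (st : state) (X : R) : Prop :=
  0 <= X /\
  (forall j, (j < length (boxes st))%nat ->
     int_disjoint (basic_box_at X) (box_region (nth_box st j))) /\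
  (forall q, In q (placed st) -> int_disjoint (basic_box_at X) (fst q)).

Inductive packer_step (st : state) (P : para) (st' : state) : Prop :=
| step_existing : forall i x ext st1 k,
    candidate st P i x ext ->
    (forall j y ext', candidate st P j y ext' ->
       (length (bty (nth_box st j)) <= length (bty (nth_box st i)))%nat) ->
    alloc_chain st i (x :: ext) st1 k ->
    place st1 P k st' ->
    packer_step st P st'
| step_new : forall X ext st1 k,
    (~ exists j y ext', candidate st P j y ext') ->
    basic_free st X ->
    (forall X', basic_free st X' -> X <= X') ->
    matches ext P ->
    alloc_chain (add_box st (mkBox [] X None)) (length (boxes st)) ext st1 k ->
    place st1 P k st' ->
    packer_step st P st'.

Inductive packer_run : list para -> state -> Prop :=
| run_nil : packer_run [] empty_state
| run_snoc : forall ps P st st',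
    packer_run ps st -> packer_step st P st' -> packer_run (ps ++ [P]) st'.

Definition near_empty (st : state) (i : nat) : Prop :=
  (i < length (boxes st))%nat /\
  length (filter (fun b => match bpar b with
                           | Some j => Nat.eqb j i | None => false end)
                 (boxes st)) = 1%nat.

Definition no_near_empty (st : state) : Prop :=
  forall i, ~ near_empty st i.

(* density = total piece area / area of the occupied part
   [0, max right end] x [0,1] *)
Definition total_area (st : state) : R :=
  fold_right Rplus 0 (map (fun q => area (fst q)) (placed st)).

Definition occupied_length (st : state) : R :=
  fold_right Rmax 0 (map (fun q => right_end (fst q)) (placed st)).

Definition density (st : state) : R := total_area st / occupied_length st.

(* Give a d-dimensional box the weight 2^-d.  Every box of the final packing either holds a
   piece or, having no near-empty box, at least two children, each of half its weight; summing
   over the allocation forest, the number B of basic boxes is at most the sum of the weights of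
   the boxes holding pieces.  A piece in a d-dimensional box has area at least 3^-d / 3, and
   since 3^-d = (2^-d)^(log 3) with log 3 > 1, comparing 2^-d with 1/(2n) gives
   3^-d >= (2/3) n^(1 - log 3) (2^-d - 1/(2n)); summing over the n pieces, the total area is at
   least n^(1 - log 3) (2B - 1) / 9 >= n^(1 - log 3) B / 9.  Basic boxes are allocated leftmost
   and the position 2B is always free, so the occupied part has length at most 2B. *)

From Stdlib Require Import Reals List Lra Lia.
Import ListNotations.
Open Scope R_scope.

Definition sumR (l : list R) : R := fold_right Rplus 0 l.

Section MapSums.
Context {A : Type}.
Implicit Types (l : list A) (f g : A -> R).

Lemma sumR_map_le l f g :
  (forall x, In x l -> f x <= g x) -> sumR (map f l) <= sumR (map g l).
Proof.
  induction l as [|x l IH]; simpl; intros Hfg; [lra|].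
  assert (f x <= g x) by auto.
  assert (sumR (map f l) <= sumR (map g l)) by auto.
  lra.
Qed.

Lemma sumR_map_ext l f g :
  (forall x, In x l -> f x = g x) -> sumR (map f l) = sumR (map g l).
Proof. intros Hfg. now rewrite (map_ext_in f g l Hfg). Qed.

Lemma sumR_map_zero l f : (forall x, In x l -> f x = 0) -> sumR (map f l) = 0.
Proof.
  intros Hf. rewrite (sumR_map_ext l f (fun _ => 0) Hf).
  clear Hf. induction l as [|x l IH]; simpl; [reflexivity|]. rewrite IH. ring.
Qed.

Lemma sumR_map_add l f g :
  sumR (map (fun x => f x + g x) l) = sumR (map f l) + sumR (map g l).
Proof. induction l as [|x l IH]; simpl; [lra|]. rewrite IH. lra. Qed.

Lemma sumR_map_affine l f a b :
  sumR (map (fun x => a * (f x - b)) l) = a * (sumR (map f l) - b * INR (length l)).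
Proof.
  induction l as [|x l IH]; simpl map; simpl sumR; [simpl; ring|].
  rewrite IH, length_cons, S_INR. ring.
Qed.

Lemma sumR_map_indicator l (p : A -> bool) :
  sumR (map (fun x => if p x then 1 else 0) l) = INR (length (filter p l)).
Proof.
  induction l as [|x l IH]; simpl; [reflexivity|].
  rewrite IH. destruct (p x); rewrite ?length_cons, ?S_INR; ring.
Qed.

Lemma sumR_map_nth l f d :
  sumR (map (fun i => f (nth i l d)) (seq 0 (length l))) = sumR (map f l).
Proof.
  induction l as [|x l IH]; [reflexivity|].
  rewrite length_cons. cbn [seq map]. rewrite <- seq_shift, map_map. simpl.
  now rewrite IH.
Qed.

End MapSums.

Lemma sumR_map_delta (h : nat -> R) s j : NoDup s -> In j s ->
  sumR (map (fun i => if Nat.eqb j i then h i else 0) s) = h j.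
Proof.
  induction s as [|i s IH]; intros Hs Hj; [destruct Hj|].
  apply NoDup_cons_iff in Hs as [Hi Hs]. simpl.
  destruct (Nat.eqb_spec j i) as [<-|Hne].
  - rewrite sumR_map_zero; [ring|].
    intros i' Hi'. destruct (Nat.eqb_spec j i'); [subst; contradiction|reflexivity].
  - destruct Hj as [->|Hj]; [contradiction|]. rewrite IH by assumption. ring.
Qed.

Definition fiber_size {A : Type} (key : A -> option nat) (l : list A) (i : nat) : nat :=
  length (filter (fun x => match key x with Some j => Nat.eqb j i | None => false end) l).

Lemma sumR_fiber {A : Type} (key : A -> option nat) (h : nat -> R) (s : list nat)
  (l : list A) :
  NoDup s -> (forall x j, In x l -> key x = Some j -> In j s) ->
  sumR (map (fun x => match key x with Some j => h j | None => 0 end) l)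
  = sumR (map (fun i => h i * INR (fiber_size key l i)) s).
Proof.
  intros Hs Hkeys. induction l as [|x l IH]; simpl.
  { symmetry. apply sumR_map_zero. intros i _. simpl. ring. }
  rewrite IH by (intros y j Hy; apply Hkeys; now right).
  destruct (key x) as [j|] eqn:Hx.
  2:{ rewrite Rplus_0_l. apply sumR_map_ext. intros i _.
      unfold fiber_size. simpl. now rewrite Hx. }
  assert (Hj : In j s) by (apply (Hkeys x); [now left|exact Hx]).
  rewrite <- (sumR_map_delta h s j Hs Hj) at 1. rewrite <- sumR_map_add.
  apply sumR_map_ext. intros i _. unfold fiber_size. simpl. rewrite Hx.
  destruct (Nat.eqb j i); rewrite ?length_cons, ?S_INR; ring.
Qed.

Lemma ln2_lt_ln3 : 0 < ln 2 < ln 3.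
Proof. split; [rewrite <- ln_1|]; apply ln_increasing; lra. Qed.

Lemma Rpower_Rinv x e : 0 < x -> Rpower (/ x) e = Rpower x (- e).
Proof. intros Hx. unfold Rpower. rewrite ln_Rinv by exact Hx. f_equal; ring. Qed.

Lemma Rpower_2_log2_3 : Rpower 2 (ln 3 / ln 2) = 3.
Proof.
  destruct ln2_lt_ln3. unfold Rpower.
  replace (ln 3 / ln 2 * ln 2) with (ln 3) by (field; lra). apply exp_ln; lra.
Qed.

Lemma third_pow_as_half_pow d : (/ 3) ^ d = Rpower ((/ 2) ^ d) (ln 3 / ln 2).
Proof.
  destruct ln2_lt_ln3.
  rewrite <- (Rpower_pow d (/ 3)) by lra. unfold Rpower.
  rewrite ln_pow, !ln_Rinv by lra. f_equal. field. lra.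
Qed.

Lemma third_pow_ge (n : R) (d : nat) : 1 <= n ->
  2 / 3 * Rpower n (1 - ln 3 / ln 2) * ((/ 2) ^ d - / (2 * n)) <= (/ 3) ^ d.
Proof.
  intros Hn. destruct ln2_lt_ln3 as [Hl2 Hl23].
  set (r := ln 3 / ln 2).
  assert (Hr : 1 <= r) by (unfold r; apply (Rmult_le_reg_r (ln 2)); [lra|]; field_simplify; lra).
  set (x := (/ 2) ^ d).
  assert (Hx : 0 < x) by (apply pow_lt; lra).
  assert (Hc : 0 < Rpower n (1 - r)) by apply exp_pos.
  destruct (Rlt_or_le x (/ (2 * n))) as [Hsmall|Hbig].
  { assert (0 < (/ 3) ^ d) by (apply pow_lt; lra). nra. }
  assert (Hscale : Rpower (/ (2 * n)) (r - 1) = 2 / 3 * Rpower n (1 - r)).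
  { rewrite Rpower_Rinv, <- Rpower_mult_distr by lra.
    replace (- (r - 1)) with (1 + - r) by ring.
    rewrite Rpower_plus, Rpower_Ropp, Rpower_1 by lra.
    unfold r; rewrite Rpower_2_log2_3. reflexivity. }
  assert (Hmono : Rpower (/ (2 * n)) (r - 1) <= Rpower x (r - 1)).
  { apply Rle_Rpower_l; [lra|]. split; [apply Rinv_0_lt_compat; lra|exact Hbig]. }
  rewrite third_pow_as_half_pow. fold r x.
  replace r with (1 + (r - 1)) at 2 by ring.
  rewrite Rpower_plus, Rpower_1 by exact Hx.
  assert (0 < / (2 * n)) by (apply Rinv_0_lt_compat; lra).
  nra.
Qed.

Definition basic_count (st : state) : nat :=
  length (filter (fun b => match bpar b with None => true | Some _ => false end) (boxes st)).

Definition depth (st : state) (i : nat) : nat := length (bty (nth_box st i)).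

Definition box_ok (st : state) (b : box) : Prop :=
  match bpar b with
  | None => bty b = []
  | Some j => (j < length (boxes st))%nat /\ length (bty b) = S (depth st j)
  end.

Definition tree_shaped (st : state) : Prop := forall b, In b (boxes st) -> box_ok st b.

Definition pieces_fit (st : state) : Prop := forall q, In q (placed st) ->
  (snd q < length (boxes st))%nat /\
  contained (fst q) (box_region (nth_box st (snd q))) /\
  area (type_para (bty (nth_box st (snd q)))) <= 6 * area (fst q).

Definition region_within (p : para) (L : R) : Prop :=
  forall x y, in_closed p x y -> 0 <= x <= L.

Definition boxes_within (st : state) : Prop :=
  forall b, In b (boxes st) -> region_within (box_region b) (2 * INR (basic_count st)).

Definition well_formed (st : state) : Prop :=
  tree_shaped st /\ pieces_fit st /\ boxes_within st.

Definition busy (st : state) (i : nat) : Prop :=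
  (exists c, is_child st i c) \/ holds_piece st i.

Definition all_busy (st : state) : Prop :=
  forall i, (i < length (boxes st))%nat -> busy st i.

(* [k] is the box allocated last, still waiting for its child or its piece. *)
Definition busy_except (st : state) (k : nat) : Prop :=
  (k < length (boxes st))%nat /\
  forall i, (i < length (boxes st))%nat -> i <> k -> busy st i.

Lemma length_add_box st b : length (boxes (add_box st b)) = S (length (boxes st)).
Proof. unfold add_box; simpl. rewrite length_app; simpl; lia. Qed.

Lemma nth_box_add_old st b i :
  (i < length (boxes st))%nat -> nth_box (add_box st b) i = nth_box st i.
Proof. intros Hi. unfold nth_box, add_box; simpl. now apply app_nth1. Qed.

Lemma nth_box_add_new st b : nth_box (add_box st b) (length (boxes st)) = b.
Proof. unfold nth_box, add_box; simpl. apply nth_middle. Qed.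

Lemma in_boxes_add st b b' : In b' (boxes (add_box st b)) -> In b' (boxes st) \/ b' = b.
Proof. unfold add_box; simpl. intros H. apply in_app_or in H as [H|[H|[]]]; auto. Qed.

Lemma basic_count_add st b : basic_count (add_box st b) =
  (basic_count st + match bpar b with None => 1 | Some _ => 0 end)%nat.
Proof.
  unfold basic_count, add_box; simpl. rewrite filter_app, length_app.
  destruct (bpar b) eqn:Hb; simpl; rewrite Hb; simpl; lia.
Qed.

Lemma box_ok_add st b b' : box_ok st b' -> box_ok (add_box st b) b'.
Proof.
  unfold box_ok, depth. destruct (bpar b') as [j|]; [|auto].
  intros [Hj Hd]. rewrite length_add_box, nth_box_add_old by exact Hj. split; [lia|exact Hd].
Qed.

Lemma region_within_mono p L L' : L <= L' -> region_within p L -> region_within p L'.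
Proof. intros HL Hp x y Hxy. specialize (Hp x y Hxy). lra. Qed.

Lemma well_formed_add st b :
  well_formed st -> box_ok st b ->
  region_within (box_region b) (2 * INR (basic_count (add_box st b))) ->
  well_formed (add_box st b).
Proof.
  intros [Htree [Hfit Hwithin]] Hb Hreg. split; [|split].
  - intros b' Hb'. apply box_ok_add.
    destruct (in_boxes_add _ _ _ Hb') as [H | ->]; auto.
  - intros q Hq. destruct (Hfit q Hq) as [Hk Hrest].
    rewrite length_add_box, nth_box_add_old by exact Hk. split; [lia|exact Hrest].
  - intros b' Hb'. destruct (in_boxes_add _ _ _ Hb') as [H | ->]; [|exact Hreg].
    apply (region_within_mono _ (2 * INR (basic_count st))); [|auto].
    rewrite basic_count_add, plus_INR.
    assert (0 <= INR (match bpar b with None => 1 | Some _ => 0 end)) by apply pos_INR.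
    lra.
Qed.

Lemma busy_add st b i : (i < length (boxes st))%nat -> busy st i -> busy (add_box st b) i.
Proof.
  intros Hi [[c [Hc Hpar]] | [q Hq]].
  - left. exists c. split; [rewrite length_add_box; lia|].
    now rewrite nth_box_add_old.
  - right. now exists q.
Qed.

Lemma add_child_preserves st i b :
  well_formed st -> busy_except st i ->
  bpar b = Some i -> length (bty b) = S (depth st i) ->
  contained (box_region b) (box_region (nth_box st i)) ->
  well_formed (add_box st b) /\ busy_except (add_box st b) (length (boxes st)).
Proof.
  intros Hwf [Hi Hbusy] Hpar Hdepth Hsub. split.
  - apply well_formed_add; [exact Hwf| |].
    + unfold box_ok. rewrite Hpar. auto.
    + rewrite basic_count_add, Hpar, Nat.add_0_r.
      intros x y Hxy. apply Hsub in Hxy.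
      destruct Hwf as [_ [_ Hwithin]]. exact (Hwithin _ (nth_In _ _ Hi) x y Hxy).
  - unfold busy_except. rewrite length_add_box. split; [lia|]. intros j Hj Hne.
    destruct (Nat.eq_dec j i) as [-> | Hji].
    + left. exists (length (boxes st)). split; [rewrite length_add_box; lia|].
      now rewrite nth_box_add_new.
    + apply busy_add, Hbusy; lia.
Qed.

Lemma add_basic_preserves st X :
  well_formed st -> all_busy st -> 0 <= X <= 2 * INR (basic_count st) ->
  well_formed (add_box st (mkBox [] X None)) /\
  busy_except (add_box st (mkBox [] X None)) (length (boxes st)).
Proof.
  intros Hwf Hbusy HX. split.
  - apply well_formed_add; [exact Hwf|reflexivity|].
    rewrite basic_count_add, plus_INR. simpl.
    intros x y Hxy. unfold box_region, in_closed, translate in Hxy. simpl in Hxy. nra.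
  - unfold busy_except. rewrite length_add_box. split; [lia|].
    intros j Hj Hne. apply busy_add, Hbusy; lia.
Qed.

Lemma basic_free_right_end st : well_formed st -> basic_free st (2 * INR (basic_count st)).
Proof.
  intros [_ [Hfit Hwithin]].
  assert (Houtside : forall p, region_within p (2 * INR (basic_count st)) ->
            int_disjoint (basic_box_at (2 * INR (basic_count st))) p).
  { intros p Hp [x [y [Hbasic Hin]]]. specialize (Hp x y).
    unfold in_open, in_closed, basic_box_at, translate in *; simpl in *.
    assert (x <= 2 * INR (basic_count st)) by (apply Hp; lra). nra. }
  split; [|split].
  - assert (0 <= INR (basic_count st)) by apply pos_INR. lra.
  - intros j Hj. apply Houtside, Hwithin, nth_In, Hj.
  - intros q Hq. destruct (Hfit q Hq) as [Hk [Hsub _]]. apply Houtside.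
    intros x y Hxy. exact (Hwithin _ (nth_In _ _ Hk) x y (Hsub x y Hxy)).
Qed.

Lemma alloc_chain_preserves st i ext st' k :
  alloc_chain st i ext st' k -> well_formed st -> busy_except st i ->
  well_formed st' /\ busy_except st' k /\
  bty (nth_box st' k) = bty (nth_box st i) ++ ext /\ placed st' = placed st.
Proof.
  induction 1 as [st i | st i x ext h st' k T Hleft Hchain IH]; intros Hwf Hbusy.
  - rewrite app_nil_r. auto.
  - destruct (add_child_preserves st i (mkBox T h (Some i)) Hwf Hbusy) as [Hwf' Hbusy'].
    + reflexivity.
    + unfold T, depth. simpl. rewrite length_app. simpl. lia.
    + apply Hleft.
    + destruct (IH Hwf' Hbusy') as [Hwf1 [Hbusy1 [Hty Hpl]]].
      split; [exact Hwf1|split; [exact Hbusy1|split; [|exact Hpl]]].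
      rewrite Hty, nth_box_add_new. unfold T. simpl. now rewrite <- app_assoc.
Qed.

Lemma place_preserves st P k st' :
  place st P k st' -> well_formed st -> busy_except st k ->
  area (type_para (bty (nth_box st k))) <= 6 * area P ->
  well_formed st' /\ all_busy st' /\ length (placed st') = S (length (placed st)).
Proof.
  intros [h [Hsub [_ ->]]] [Htree [Hfit Hwithin]] [Hk Hbusy] Harea.
  set (q := (translate P h, k)).
  assert (Hq : In q (placed st ++ [q])) by (apply in_or_app; right; now left).
  split; [split; [|split] | split].
  - exact Htree.
  - intros q' Hq'. apply in_app_or in Hq' as [Hq' | [<- | []]]; [now apply Hfit|].
    split; [exact Hk|split; [exact Hsub|exact Harea]].
  - exact Hwithin.
  - intros i Hi. destruct (Nat.eq_dec i k) as [-> | Hne].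
    + right. now exists q.
    + destruct (Hbusy i Hi Hne) as [Hc | [q' [Hq' Hi']]]; [now left|].
      right. exists q'. split; [apply in_or_app; now left|exact Hi'].
  - simpl. rewrite length_app. simpl. lia.
Qed.

Lemma packer_step_preserves st P st' :
  packer_step st P st' -> well_formed st -> all_busy st ->
  well_formed st' /\ all_busy st' /\ length (placed st') = S (length (placed st)).
Proof.
  intros Hstep Hwf Hbusy.
  destruct Hstep as [i x ext st1 k [Hi [Hmatch _]] _ Hchain Hplace
                    | X ext st1 k _ Hfree Hleftmost Hmatch Hchain Hplace].
  - destruct (alloc_chain_preserves _ _ _ _ _ Hchain Hwf (conj Hi (fun j Hj _ => Hbusy j Hj)))
      as [Hwf1 [Hbusy1 [Hty Hpl]]].
    rewrite <- Hpl. apply (place_preserves _ _ _ _ Hplace Hwf1 Hbusy1).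
    rewrite Hty. apply Hmatch.
  - assert (HX : 0 <= X <= 2 * INR (basic_count st)).
    { split; [apply Hfree|]. apply Hleftmost, basic_free_right_end, Hwf. }
    destruct (add_basic_preserves st X Hwf Hbusy HX) as [Hwf0 Hbusy0].
    destruct (alloc_chain_preserves _ _ _ _ _ Hchain Hwf0 Hbusy0) as [Hwf1 [Hbusy1 [Hty Hpl]]].
    rewrite nth_box_add_new in Hty. simpl in Hty.
    change (placed st) with (placed (add_box st (mkBox [] X None))). rewrite <- Hpl.
    apply (place_preserves _ _ _ _ Hplace Hwf1 Hbusy1).
    rewrite Hty. apply Hmatch.
Qed.

Lemma packer_run_invariant ps st :
  packer_run ps st -> well_formed st /\ all_busy st /\ length (placed st) = length ps.
Proof.
  induction 1 as [|ps P st st' _ [Hwf [Hbusy Hlen]] Hstep].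
  - split; [split; [|split]|split; [|reflexivity]];
      intros ? Hin; simpl in Hin; [contradiction..|lia].
  - destruct (packer_step_preserves _ _ _ Hstep Hwf Hbusy) as [Hwf' [Hbusy' Hlen']].
    split; [exact Hwf'|split; [exact Hbusy'|]]. rewrite Hlen', length_app, Hlen. simpl. lia.
Qed.

Lemma area_type_para T : area (type_para T) = 2 * (/ 3) ^ length T.
Proof.
  unfold area, type_para.
  assert (Hpl : forall p, pl (fold_left child_para T p) = pl p * (/ 3) ^ length T).
  { induction T as [|x T IH]; intros p; simpl; [ring|]. rewrite IH. simpl. field. }
  rewrite Hpl. simpl. ring.
Qed.

Lemma two_le_children st i c :
  no_near_empty st -> (i < length (boxes st))%nat -> is_child st i c ->
  2 <= INR (fiber_size bpar (boxes st) i).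
Proof.
  intros Hne Hi [Hc Hpar].
  assert (Hpos : (1 <= fiber_size bpar (boxes st) i)%nat).
  { assert (Hin : In (nth_box st c) (filter (fun b => match bpar b with
                     Some j => Nat.eqb j i | None => false end) (boxes st))).
    { apply filter_In. split; [apply nth_In, Hc|]. rewrite Hpar. apply Nat.eqb_refl. }
    unfold fiber_size. destruct (filter _ _); [destruct Hin|simpl; lia]. }
  assert (Hne1 : fiber_size bpar (boxes st) i <> 1%nat) by (intros H; exact (Hne i (conj Hi H))).
  apply (le_INR 2). lia.
Qed.

Lemma basic_count_le_piece_weights st :
  tree_shaped st -> pieces_fit st -> all_busy st -> no_near_empty st ->
  INR (basic_count st) <= sumR (map (fun q => (/ 2) ^ depth st (snd q)) (placed st)).
Proof.
  intros Htree Hfit Hbusy Hne.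
  set (w := fun i => (/ 2) ^ depth st i).
  set (s := seq 0 (length (boxes st))).
  assert (Hs : NoDup s) by apply seq_NoDup.
  assert (Hin_s : forall i, In i s <-> (i < length (boxes st))%nat).
  { intros i. unfold s. rewrite in_seq. lia. }
  set (children := fun i => INR (fiber_size bpar (boxes st) i)).
  set (pieces := fun i => INR (fiber_size (fun q : para * nat => Some (snd q)) (placed st) i)).
  assert (Hboxes : sumR (map w s)
                   = INR (basic_count st) + sumR (map (fun i => w i / 2 * children i) s)).
  { transitivity (sumR (map (fun b => (/ 2) ^ length (bty b)) (boxes st))).
    { exact (sumR_map_nth (boxes st) (fun b => (/ 2) ^ length (bty b)) dummy_box). }
    rewrite (sumR_map_ext _ _ (fun b => (if match bpar b with None => true | Some _ => false end
                                         then 1 else 0) +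
                                        match bpar b with Some j => w j / 2 | None => 0 end)).
    - rewrite sumR_map_add, sumR_map_indicator. f_equal. apply sumR_fiber; [exact Hs|].
      intros b j Hb Hj. apply Hin_s. specialize (Htree b Hb). unfold box_ok in Htree.
      rewrite Hj in Htree. apply Htree.
    - intros b Hb. specialize (Htree b Hb). unfold box_ok in Htree.
      destruct (bpar b) as [j|].
      + destruct Htree as [_ ->]. unfold w. simpl. field.
      + rewrite Htree. simpl. ring. }
  assert (Hpieces : sumR (map (fun q => w (snd q)) (placed st))
                    = sumR (map (fun i => w i * pieces i) s)).
  { apply (sumR_fiber (fun q : para * nat => Some (snd q))); [exact Hs|].
    intros q j Hq [= <-]. apply Hin_s, (Hfit q Hq). }
  assert (Hlocal : forall i, In i s -> w i <= w i / 2 * children i + w i * pieces i).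
  { intros i Hi. apply Hin_s in Hi.
    assert (Hw : 0 < w i) by (apply pow_lt; lra).
    assert (0 <= children i) by apply pos_INR.
    assert (0 <= pieces i) by apply pos_INR.
    destruct (Hbusy i Hi) as [[c Hc] | [q [Hq Hqi]]].
    - assert (2 <= children i) by exact (two_le_children st i c Hne Hi Hc). nra.
    - assert (Hone : 1 <= pieces i).
      { apply (le_INR 1). unfold fiber_size.
        assert (Hin : In q (filter (fun q => Nat.eqb (snd q) i) (placed st))).
        { apply filter_In. split; [exact Hq|]. rewrite Hqi. apply Nat.eqb_refl. }
        destruct (filter _ _); [destruct Hin|simpl; lia]. }
      nra. }
  apply sumR_map_le in Hlocal. rewrite sumR_map_add in Hlocal.
  change (INR (basic_count st) <= sumR (map (fun q => w (snd q)) (placed st))). lra.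
Qed.

Lemma piece_area_ge st q : pieces_fit st -> In q (placed st) ->
  (/ 3) ^ depth st (snd q) / 3 <= area (fst q).
Proof.
  intros Hfit Hq. destruct (Hfit q Hq) as [_ [_ Harea]].
  rewrite area_type_para in Harea. unfold depth. lra.
Qed.

Lemma piece_right_end_bounds st q : well_formed st -> In q (placed st) ->
  0 < right_end (fst q) <= 2 * INR (basic_count st).
Proof.
  intros [_ [Hfit Hwithin]] Hq.
  assert (Hpl : 0 < pl (fst q)).
  { assert (H := piece_area_ge st q Hfit Hq). unfold area in H.
    assert (0 < (/ 3) ^ depth st (snd q)) by (apply pow_lt; lra). lra. }
  destruct (Hfit q Hq) as [Hk [Hsub _]].
  destruct q as [p k]; simpl in *.
  assert (Hx : forall x y, in_closed p x y -> 0 <= x <= 2 * INR (basic_count st))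
    by (intros x y Hxy; exact (Hwithin _ (nth_In _ _ Hk) x y (Hsub x y Hxy))).
  assert (Hbot_left := Hx (pb p) 0).
  assert (Hbot_right := Hx (pb p + pl p) 0).
  assert (Htop_right := Hx (pt p + pl p) 1).
  unfold in_closed in *. unfold right_end, Rmax.
  destruct (Rle_dec (pb p) (pt p)); split; nra.
Qed.

Lemma fold_right_Rmax_lub (l : list R) M :
  0 <= M -> (forall x, In x l -> x <= M) -> fold_right Rmax 0 l <= M.
Proof.
  induction l as [|x l IH]; simpl; intros HM Hl; [exact HM|].
  apply Rmax_lub; auto.
Qed.

Lemma fold_right_Rmax_ub (l : list R) x : In x l -> x <= fold_right Rmax 0 l.
Proof.
  induction l as [|y l IH]; simpl; intros Hx; [destruct Hx|].
  destruct Hx as [-> | Hx]; [apply Rmax_l|].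
  eapply Rle_trans; [apply IH, Hx|apply Rmax_r].
Qed.

Lemma occupied_length_bounds st : well_formed st -> placed st <> [] ->
  0 < occupied_length st <= 2 * INR (basic_count st).
Proof.
  intros Hwf Hne. destruct (placed st) as [|q l] eqn:Hpl; [contradiction|].
  assert (Hq : In q (placed st)) by (rewrite Hpl; now left).
  destruct (piece_right_end_bounds st q Hwf Hq) as [Hpos Hle].
  unfold occupied_length. rewrite Hpl. split.
  - eapply Rlt_le_trans; [exact Hpos|]. apply fold_right_Rmax_ub. now left.
  - apply fold_right_Rmax_lub; [lra|]. intros x Hx.
    apply in_map_iff in Hx as [q' [<- Hq']]. rewrite <- Hpl in Hq'.
    apply (piece_right_end_bounds st q' Hwf Hq').
Qed.

Lemma total_area_ge st :
  well_formed st -> all_busy st -> no_near_empty st -> (1 <= length (placed st))%nat ->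
  2 / 9 * Rpower (INR (length (placed st))) (1 - ln 3 / ln 2) * (INR (basic_count st) - 1 / 2)
  <= total_area st.
Proof.
  intros [Htree [Hfit Hwithin]] Hbusy Hne Hlen.
  set (n := INR (length (placed st))).
  assert (Hn : 1 <= n) by (apply (le_INR 1), Hlen).
  set (c := Rpower n (1 - ln 3 / ln 2)).
  assert (Hc : 0 < c) by apply exp_pos.
  assert (Hsum : sumR (map (fun q => 2 / 9 * c * ((/ 2) ^ depth st (snd q) - / (2 * n)))
                           (placed st))
                 <= total_area st).
  { apply sumR_map_le. intros q Hq.
    assert (H := third_pow_ge n (depth st (snd q)) Hn).
    assert (H' := piece_area_ge st q Hfit Hq). fold c in H. lra. }
  rewrite sumR_map_affine in Hsum. fold n in Hsum.
  replace (/ (2 * n) * n) with (1 / 2) in Hsum by (field; lra).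
  assert (Hkraft := basic_count_le_piece_weights st Htree Hfit Hbusy Hne).
  nra.
Qed.

Theorem lemma17 :
  exists c : R, 0 < c /\
  exists N : nat,
  forall (ps : list para) (st : state),
    (N <= length ps)%nat ->
    Forall valid_piece ps ->
    packer_run ps st ->
    no_near_empty st ->
    density st >= c * Rpower (INR (length ps)) (1 - ln 3 / ln 2).
Proof.
  exists (1 / 18). split; [lra|]. exists 1%nat.
  intros ps st Hn _ Hrun Hne.
  destruct (packer_run_invariant ps st Hrun) as [Hwf [Hbusy Hlen]].
  rewrite <- Hlen in *.
  assert (Hplaced : placed st <> []) by (intros H; rewrite H in Hn; simpl in Hn; lia).
  assert (Harea := total_area_ge st Hwf Hbusy Hne Hn).
  destruct (occupied_length_bounds st Hwf Hplaced) as [Hocc_pos Hocc_le].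
  assert (HB : 1 <= INR (basic_count st)).
  { destruct (basic_count st); [simpl in Hocc_le; lra|]. apply (le_INR 1). lia. }
  set (c := Rpower (INR (length (placed st))) (1 - ln 3 / ln 2)) in *.
  assert (Hc : 0 < c) by apply exp_pos.
  unfold density, Rdiv. apply Rle_ge, (Rmult_le_reg_r (occupied_length st)); [exact Hocc_pos|].
  replace (total_area st * / occupied_length st * occupied_length st) with (total_area st)
    by (field; lra).
  nra.
Qed.
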